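(* Let $\kappa \leq \lambda $ be infinite regular cardinals and let $(\mathcal{C},E)$ be a $\kappa $-site such that the category $Mod_{\kappa }(\mathcal{C},E)$ is $\lambda $-accessible. Then every $\lambda $-pure morphism $\alpha :M\Rightarrow N$ in $Mod_{\kappa }(\mathcal{C},E)$ is elementary.
   Context: A $\kappa $-site $(\mathcal{C},E)$ consists of a small category $\mathcal{C}$ with all $\kappa $-small limits ($\kappa $-lex category) together with a set $E$ of families of morphisms of $\mathcal{C}$ with a common codomain. $Mod_{\kappa }(\mathcal{C},E)$ is the full subcategory of the functor category $\mathbf{Set}^{\mathcal{C}}$ spanned by the functors $F:\mathcal{C}\to\mathbf{Set}$ that preserve $\kappa $-small limits and send every family in $E$ to a jointly surjective family of functions; morphisms are natural transformations. A natural transformation $\alpha :M\Rightarrow N$ between finite-limit-preserving functors $M,N:\mathcal{C}\to\mathbf{Set}$ is elementary if for every monomorphism $i:u\hookrightarrow x$ in $\mathcal{C}$ the naturality square with sides $Mi$, $Ni$, $\alpha_u$, $\alpha_x$ is a pullback (i.e. for every $a\in Mx$, if $\alpha_x(a)$ lies in the image of $Ni$ then $a$ lies in the image of $Mi$). In a $\lambda $-accessible category, a morphism $f:x\to y$ is $\lambda $-pure if for every commutative square $g:a\to x$, $k:a\to b$, $l:b\to y$ with $f\circ g=l\circ k$ and $a,b$ $\lambda $-presentable, there is $h:b\to x$ with $h\circ k=g$. *)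

From Stdlib Require Import FunctionalExtensionality ProofIrrelevance.

Set Universe Polymorphism.
Set Polymorphic Inductive Cumulativity.
Set Implicit Arguments.


Definition injective@{a b} (A : Type@{a}) (B : Type@{b}) (f : A -> B) : Prop :=
  forall a a', f a = f a' -> a = a'.

Definition card_le@{a b} (A : Type@{a}) (B : Type@{b}) : Prop := exists f : A -> B, injective f.
Definition card_lt@{a b} (A : Type@{a}) (B : Type@{b}) : Prop :=
  card_le@{a b} A B /\ ~ card_le@{b a} B A.

Definition infinite_card@{s} (K : Type@{s}) : Prop := card_le@{Set s} nat K.

Definition regular_card@{s} (K : Type@{s}) : Prop :=
  infinite_card@{s} K /\
  forall (I : Type@{s}) (A : I -> Type@{s}),
    card_lt@{s s} I K -> (forall i, card_lt@{s s} (A i) K) ->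
    card_lt@{s s} {i : I & A i} K.

Record Category@{o h} := {
  Ob :> Type@{o};
  Hom : Ob -> Ob -> Type@{h};
  idm : forall x, Hom x x;
  comp : forall x y z, Hom y z -> Hom x y -> Hom x z;
  comp_idl : forall x y (f : Hom x y), comp (idm y) f = f;
  comp_idr : forall x y (f : Hom x y), comp f (idm x) = f;
  comp_assoc : forall x y z w (h : Hom z w) (g : Hom y z) (f : Hom x y),
      comp h (comp g f) = comp (comp h g) f
}.
Arguments Hom {C} x y : rename.
Arguments idm {C} x : rename.
Arguments comp {C x y z} g f : rename.

Definition Mor@{s} (C : Category@{s s}) : Type@{s} := {x : C & {y : C & Hom x y}}.

Record Functor (C D : Category) := {
  fobj :> C -> D;
  fmap : forall x y, Hom x y -> Hom (fobj x) (fobj y);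
  fmap_id : forall x, fmap x x (idm x) = idm (fobj x);
  fmap_comp : forall x y z (g : Hom y z) (f : Hom x y),
      fmap x z (comp g f) = comp (fmap y z g) (fmap x y f)
}.
Arguments fmap {C D} F {x y} f : rename.

Definition compF (C D E : Category) (F : Functor C D) (G : Functor D E)
  : Functor C E.
Proof.
  refine {| fobj := fun x => G (F x);
            fmap := fun x y f => fmap G (fmap F f) |}.
  - intros x. rewrite fmap_id. apply fmap_id.
  - intros x y z g f. rewrite fmap_comp. apply fmap_comp.
Defined.

Definition SetCat@{s o | s < o} : Category@{o s} :=
  {| Ob := (Type@{s} : Type@{o});
     Hom := fun A B : Type@{s} => A -> B;
     idm := fun (A : Type@{s}) (a : A) => a;
     comp := fun (A B C : Type@{s}) (g : B -> C) (f : A -> B) (a : A) => g (f a);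
     comp_idl := fun _ _ _ => eq_refl;
     comp_idr := fun _ _ _ => eq_refl;
     comp_assoc := fun _ _ _ _ _ _ _ => eq_refl |}.

Definition is_cone (J C : Category) (D : Functor J C) (c : C)
  (pi : forall j, Hom c (D j)) : Prop :=
  forall j j' (u : Hom j j'), comp (fmap D u) (pi j) = pi j'.

Definition is_limit (J C : Category) (D : Functor J C) (c : C)
  (pi : forall j, Hom c (D j)) : Prop :=
  is_cone D c pi /\
  forall (c' : C) (pi' : forall j, Hom c' (D j)), is_cone D c' pi' ->
    exists! u : Hom c' c, forall j, comp (pi j) u = pi' j.

Definition is_cocone (J C : Category) (D : Functor J C) (c : C)
  (iota : forall j, Hom (D j) c) : Prop :=
  forall j j' (u : Hom j j'), comp (iota j') (fmap D u) = iota j.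

Definition is_colimit (J C : Category) (D : Functor J C) (c : C)
  (iota : forall j, Hom (D j) c) : Prop :=
  is_cocone D c iota /\
  forall (c' : C) (iota' : forall j, Hom (D j) c'), is_cocone D c' iota' ->
    exists! u : Hom c c', forall j, comp u (iota j) = iota' j.

Definition small_cat@{s} (K : Type@{s}) (J : Category@{s s}) : Prop :=
  card_lt@{s s} (Mor@{s} J) K.

Definition has_small_limits@{s} (K : Type@{s}) (C : Category@{s s}) : Prop :=
  forall (J : Category@{s s}) (D : Functor J C), small_cat@{s} K J ->
    exists (c : C) (pi : forall j, Hom c (D j)), is_limit D c pi.

Definition preserves_small_limits@{s o} (K : Type@{s}) (C : Category@{s s})
  (F : Functor C SetCat@{s o}) : Prop :=
  forall (J : Category@{s s}) (D : Functor J C), small_cat@{s} K J ->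
    forall (c : C) (pi : forall j, Hom c (D j)), is_limit D c pi ->
      is_limit (compF D F) (F c) (fun j => fmap F (pi j)).

Record Family@{s} (C : Category@{s s}) := {
  fam_cod : C;
  fam_idx : Type@{s};
  fam_dom : fam_idx -> C;
  fam_arr : forall i, Hom (fam_dom i) fam_cod
}.

Definition jointly_surjective@{s o} (C : Category@{s s})
  (F : Functor C SetCat@{s o}) (f : Family@{s} C) : Prop :=
  forall a : F (fam_cod f),
    exists (i : fam_idx f) (b : F (fam_dom f i)), fmap F (fam_arr f i) b = a.

Definition is_model@{s o} (K : Type@{s}) (C : Category@{s s})
  (E : Family@{s} C -> Prop) (F : Functor C SetCat@{s o}) : Prop :=
  preserves_small_limits@{s o} K F /\
  forall f, E f -> jointly_surjective@{s o} F f.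

Record NatTrans (C : Category) (F G : Functor C SetCat) := {
  nt :> forall x, F x -> G x;
  nt_natural : forall x y (f : Hom x y) (a : F x),
      nt y (fmap F f a) = fmap G f (nt x a)
}.

Lemma NatTrans_eq (C : Category) (F G : Functor C SetCat)
  (a b : NatTrans F G) : (forall x v, a x v = b x v) -> a = b.
Proof.
  destruct a as [a na], b as [b nb]; simpl; intros H.
  assert (a = b) as ->.
  { apply functional_extensionality_dep; intro x.
    apply functional_extensionality; intro v; apply H. }
  f_equal; apply proof_irrelevance.
Qed.

Definition nt_id (C : Category) (F : Functor C SetCat) : NatTrans F F.
Proof. refine {| nt := fun x v => v |}; reflexivity. Defined.

Definition nt_comp (C : Category) (F G H : Functor C SetCat)
  (b : NatTrans G H) (a : NatTrans F G) : NatTrans F H.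
Proof.
  refine {| nt := fun x v => b x (a x v) |}.
  intros x y f v; simpl. rewrite (nt_natural a), (nt_natural b). reflexivity.
Defined.

Definition ModCat@{s o | s < o +} (K : Type@{s}) (C : Category@{s s})
  (E : Family@{s} C -> Prop) : Category@{o s}.
Proof.
  refine {| Ob := {F : Functor C SetCat@{s o} | is_model@{s o} K E F};
            Hom := fun M N => NatTrans (proj1_sig M) (proj1_sig N);
            idm := fun M => nt_id (proj1_sig M);
            comp := fun M N P b a => nt_comp b a |};
    intros; apply NatTrans_eq; reflexivity.
Defined.

Definition filtered@{s} (L : Type@{s}) (J : Category@{s s}) : Prop :=
  forall (S : Category@{s s}) (D : Functor S J), small_cat@{s} L S ->
    exists (j : J) (iota : forall s, Hom (D s) j), is_cocone D j iota.

Definition has_filtered_colimits@{s o} (L : Type@{s}) (A : Category@{o s})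
  : Prop :=
  forall (J : Category@{s s}) (D : Functor J A), filtered@{s} L J ->
    exists (c : A) (iota : forall j, Hom (D j) c), is_colimit D c iota.

Definition HomF@{s o | s < o +} (A : Category@{o s}) (X : A)
  : Functor A SetCat@{s o}.
Proof.
  refine {| fobj := fun Y => (Hom X Y : SetCat@{s o});
            fmap := fun Y Z (f : Hom Y Z) (g : Hom X Y) => comp f g |}.
  - intros Y; apply functional_extensionality; intro g; simpl; apply comp_idl.
  - intros Y Z W h g; apply functional_extensionality; intro f; simpl;
      symmetry; apply comp_assoc.
Defined.

Arguments HomF {A} X.

Definition presentable@{s o | s < o +} (L : Type@{s}) (A : Category@{o s})
  (X : A) : Prop :=
  forall (J : Category@{s s}) (D : Functor J A), filtered@{s} L J ->
    forall (c : A) (iota : forall j, Hom (D j) c), is_colimit D c iota ->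
      is_colimit (compF D (HomF@{s o} X)) (fobj (HomF@{s o} X) c)
                 (fun j => fmap (HomF@{s o} X) (iota j)).

Arguments presentable L {A} X.

Definition accessible@{s o | s < o +} (L : Type@{s}) (A : Category@{o s})
  : Prop :=
  has_filtered_colimits@{s o} L A /\
  exists (I : Type@{s}) (G : I -> A),
    (forall i, presentable@{s o} L (G i)) /\
    forall X : A, exists (J : Category@{s s}) (D : Functor J A),
      filtered@{s} L J /\ (forall j, exists i, D j = G i) /\
      exists iota : forall j, Hom (D j) X, is_colimit D X iota.

Definition pure@{s o | s < o +} (L : Type@{s}) (A : Category@{o s}) (x y : A)
  (f : Hom x y) : Prop :=
  forall (a b : A), presentable@{s o} L a -> presentable@{s o} L b ->
    forall (g : Hom a x) (k : Hom a b) (l : Hom b y),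
      comp f g = comp l k -> exists h : Hom b x, comp h k = g.

Arguments pure L {A x y} f.

Definition is_mono@{s} (C : Category@{s s}) (u x : C) (i : Hom u x) : Prop :=
  forall (z : C) (p q : Hom z u), comp i p = comp i q -> p = q.

Arguments is_mono {C u x} i.

Definition elementary@{s o | s < o} (C : Category@{s s})
  (M N : Functor C SetCat@{s o})
  (alpha : NatTrans M N) : Prop :=
  forall (u x : C) (i : Hom u x), is_mono i ->
    forall a : M x, (exists b : N u, fmap N i b = alpha x a) ->
      exists c : M u, fmap M i c = a.

Arguments elementary {C M N} alpha.

(* Write M and N as lambda-filtered colimits of lambda-presentable models. Such colimits
   in Mod_kappa(C,E) are computed pointwise, because in Set lambda-filtered colimits commute
   with kappa-small limits (kappa <= lambda) and preserve jointly surjective families: every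
   element of the colimit comes from some stage, and elements coming from two stages agree
   in the colimit iff they agree at a common later stage.
   Given a in M(x) and b in N(u) with N(i)(b) = alpha_x(a), let a come from a presentable
   stage A -> M and b from a stage of N. Presentability of A factors alpha through a stage
   of N, and the two resulting elements of N(x) agree at a later presentable stage B. Purity
   lifts A -> B to h : B -> M, and h_u sends the image of b in B(u) to a preimage of a. *)

From Stdlib Require Import FunctionalExtensionality ProofIrrelevance PropExtensionality.
From Stdlib Require Import ClassicalEpsilon.
Set Universe Polymorphism.
Set Implicit Arguments.

(** * Cardinals *)

Lemma card_le_trans (A B X : Type) : card_le A B -> card_le B X -> card_le A X.
Proof.
  intros [f hf] [g hg]. exists (fun a => g (f a)). intros a a' h. apply hf, hg, h.
Qed.

Lemma card_le_lt_trans (A B X : Type) : card_le A B -> card_lt B X -> card_lt A X.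
Proof.
  intros h [h1 h2]. split; [eapply card_le_trans; eauto|].
  intro h3. apply h2. eapply card_le_trans; eauto.
Qed.

Lemma card_lt_le_trans (A B X : Type) : card_lt A B -> card_le B X -> card_lt A X.
Proof.
  intros [h1 h2] h. split; [eapply card_le_trans; eauto|].
  intro h3. apply h2. eapply card_le_trans; eauto.
Qed.

Lemma card_le_bool_nat : card_le bool nat.
Proof.
  exists (fun b : bool => if b then 1 else 0). intros [] [] h; auto; discriminate.
Qed.

Lemma not_card_le_nat_bool : ~ card_le nat bool.
Proof.
  intros [f hf].
  assert (h : f 0 = f 1 \/ f 0 = f 2 \/ f 1 = f 2)
    by (destruct (f 0), (f 1), (f 2); auto).
  destruct h as [h|[h|h]]; apply hf in h; discriminate.
Qed.

Lemma card_lt_of_le_bool (L A : Type) : infinite_card L -> card_le A bool -> card_lt A L.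
Proof.
  intros hL hA. split.
  - eapply card_le_trans; [exact hA|].
    eapply card_le_trans; [exact card_le_bool_nat|exact hL].
  - intro h. apply not_card_le_nat_bool.
    eapply card_le_trans; [exact hL|]. eapply card_le_trans; eauto.
Qed.

Lemma card_lt_bool (L : Type) : infinite_card L -> card_lt bool L.
Proof.
  intros hL. apply card_lt_of_le_bool; [exact hL|].
  exists (fun b => b). intros a b e; exact e.
Qed.

Lemma card_lt_unit (L : Type) : infinite_card L -> card_lt unit L.
Proof.
  intros hL. apply card_lt_of_le_bool; [exact hL|].
  exists (fun _ => true). intros [] [] _; reflexivity.
Qed.

Lemma card_lt_option (L I : Type) : regular_card L -> card_lt I L -> card_lt (option I) L.
Proof.
  intros [hinf hreg] hI.
  pose (A := fun b : bool => if b then I else unit).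
  assert (hsum : card_lt {b : bool & A b} L).
  { apply hreg; [exact (card_lt_bool hinf)|].
    intros []; [exact hI|exact (card_lt_unit hinf)]. }
  eapply card_le_lt_trans; [|exact hsum].
  exists (fun o => match o with Some i => existT A true i | None => existT A false tt end).
  intros [i|] [i'|] e; try discriminate; [|reflexivity].
  exact (f_equal (fun p : {b : bool & A b} =>
                    match p with existT _ true y => Some (y : I) | _ => None end) e).
Qed.

Lemma card_le_Ob_Mor (J : Category) : card_le J (Mor J).
Proof.
  exists (fun x => existT _ x (existT _ x (idm x))).
  intros a b e. exact (f_equal (@projT1 _ _) e).
Qed.

Lemma small_cat_Ob (L : Type) (J : Category) : small_cat L J -> card_lt J L.
Proof. apply card_le_lt_trans, card_le_Ob_Mor. Qed.

(** * Cocones in lambda-filtered categories *)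

Definition discrete_cat@{s +} (I : Type@{s}) : Category@{s s}.
Proof.
  refine {| Ob := I; Hom := fun x y => x = y; idm := fun x => eq_refl;
            comp := fun x y z g f => eq_trans f g |};
    intros; apply proof_irrelevance.
Defined.

Definition discrete_functor@{s +} (I : Type@{s}) (J : Category@{s s}) (g : I -> J)
  : Functor (discrete_cat I) J.
Proof.
  refine {| fobj := (g : discrete_cat I -> J);
            fmap := fun x y (p : x = y) =>
              match p in _ = y' return Hom (g x) (g y') with eq_refl => idm (g x) end |}.
  - reflexivity.
  - intros x y z q p. simpl in *. destruct p, q. symmetry; apply comp_idl.
Defined.

Lemma discrete_cat_small@{s +} (L I : Type@{s}) :
  regular_card L -> card_lt I L -> small_cat L (discrete_cat I).
Proof.
  intros [hinf hreg] hI. apply hreg; [exact hI|]. intros x.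
  apply card_lt_of_le_bool; [exact hinf|]. exists (fun _ => true).
  intros [y p] [y' p'] _. simpl in *. subst. reflexivity.
Qed.

Lemma filtered_upper_bound@{s +} (L : Type@{s}) (J : Category@{s s}) (I : Type@{s})
  (g : I -> J) :
  regular_card L -> filtered L J -> card_lt I L ->
  exists k : J, inhabited (forall i, Hom (g i) k).
Proof.
  intros hL hJ hI.
  destruct (hJ _ (discrete_functor J g) (discrete_cat_small hL hI)) as [k [io _]].
  exists k. exact (inhabits io).
Qed.

(* The source [None] sends two arrows [true], [false] to each [Some i]; a cocone on
   the corresponding diagram coequalizes all the pairs at once. *)
Definition fork_hom@{s +} (I : Type@{s}) (x y : option I) : Type@{s} :=
  match x, y with
  | None, None => unit
  | None, Some _ => bool
  | Some i, Some i' => i = i'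
  | Some _, None => Empty_set
  end.

Definition fork_comp@{s +} (I : Type@{s}) (x y z : option I) :
  fork_hom y z -> fork_hom x y -> fork_hom x z :=
  match x, y, z return fork_hom y z -> fork_hom x y -> fork_hom x z with
  | None, None, None => fun _ _ => tt
  | None, None, Some _ => fun g _ => g
  | None, Some _, None => fun g _ => match g with end
  | None, Some _, Some _ => fun _ f => f
  | Some _, None, _ => fun _ f => match f with end
  | Some _, Some _, None => fun g _ => match g with end
  | Some _, Some _, Some _ => fun g f => eq_trans f g
  end.

Definition fork_id@{s +} (I : Type@{s}) (x : option I) : fork_hom x x :=
  match x with None => tt | Some i => eq_refl end.

Definition fork_cat@{s +} (I : Type@{s}) : Category@{s s}.
Proof.
  refine {| Ob := option I; Hom := @fork_hom I; idm := @fork_id I; comp := @fork_comp I |}.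
  - intros [x|] [y|] f; simpl in *; try destruct f; try reflexivity; apply proof_irrelevance.
  - intros [x|] [y|] f; simpl in *; try destruct f; try reflexivity; apply proof_irrelevance.
  - intros [x|] [y|] [z|] [w|] h g f; simpl in *; try destruct h; try destruct g;
      try destruct f; try reflexivity; apply proof_irrelevance.
Defined.

Section Fork.
Universe s.
Context (I : Type@{s}) (J : Category@{s s}) (j : J) (k : I -> J)
  (f f' : forall i, Hom j (k i)).

Definition fork_obj (x : option I) : J := match x with None => j | Some i => k i end.

Definition fork_map (x y : option I) : fork_hom x y -> Hom (fork_obj x) (fork_obj y) :=
  match x, y return fork_hom x y -> Hom (fork_obj x) (fork_obj y) with
  | None, None => fun _ => idm j
  | None, Some i => fun b => if b then f i else f' i
  | Some i, Some i' => fun p =>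
      match p in _ = i2 return Hom (k i) (k i2) with eq_refl => idm (k i) end
  | Some _, None => fun e => match e with end
  end.

Definition fork_functor : Functor (fork_cat I) J.
Proof.
  refine {| fobj := (fork_obj : fork_cat I -> J); fmap := fork_map |}.
  - intros [x|]; reflexivity.
  - intros [x|] [y|] [z|] g h; simpl in *; try destruct g; try destruct h; simpl;
      first [ symmetry; apply comp_idl | symmetry; apply comp_idr | idtac ].
Defined.
End Fork.

Lemma fork_cat_small@{s +} (L I : Type@{s}) :
  regular_card L -> card_lt I L -> small_cat L (fork_cat I).
Proof.
  intros hL hI. pose proof (card_lt_option hL hI) as hO.
  destruct hL as [hinf hreg].
  apply hreg; [exact hO|]. intros x. apply hreg; [exact hO|]. intros y.
  apply card_lt_of_le_bool; [exact hinf|].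
  destruct x as [x|], y as [y|]; simpl.
  - exists (fun _ => true). intros p q _; apply proof_irrelevance.
  - exists (fun e : Empty_set => match e with end). intros [].
  - exists (fun b => b). intros a b e; exact e.
  - exists (fun _ => true). intros [] [] _; reflexivity.
Qed.

Lemma filtered_coequalize@{s +} (L : Type@{s}) (J : Category@{s s}) (I : Type@{s}) {j : J}
  (k : I -> J) (f f' : forall i, Hom j (k i)) :
  regular_card L -> filtered L J -> card_lt I L ->
  exists (m : J) (c : Hom j m), forall i, exists ci : Hom (k i) m,
     comp ci (f i) = c /\ comp ci (f' i) = c.
Proof.
  intros hL hJ hI.
  destruct (hJ _ (fork_functor J j k f f') (fork_cat_small hL hI)) as [m [io hio]].
  exists m, (io None). intros i. exists (io (Some i)).
  exact (conj (hio None (Some i) true) (hio None (Some i) false)).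
Qed.

Lemma filtered_span@{s +} (L : Type@{s}) (J : Category@{s s}) {j j1 j2 : J}
  (f1 : Hom j j1) (f2 : Hom j j2) :
  regular_card L -> filtered L J ->
  exists k (g1 : Hom j1 k) (g2 : Hom j2 k), comp g1 f1 = comp g2 f2.
Proof.
  intros hL hJ.
  destruct (filtered_upper_bound (fun b : bool => if b then j1 else j2) hL hJ
              (card_lt_bool (proj1 hL))) as [k [io]].
  destruct (filtered_coequalize (fun _ : unit => k) (fun _ => comp (io true) f1)
              (fun _ => comp (io false) f2) hL hJ (card_lt_unit (proj1 hL))) as [m [c hc]].
  destruct (hc tt) as [ci [h1 h2]].
  exists m, (comp ci (io true)), (comp ci (io false)).
  rewrite <- !comp_assoc, h1, h2. reflexivity.
Qed.

(** * Limits and colimits in Set *)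

Section SetLimits.
Universes s o.
Constraint s < o.
Context (J : Category@{s s}) (F : Functor J SetCat@{s o}).

Lemma set_limit_point (c : SetCat@{s o}) (pi : forall j, Hom c (F j)) :
  is_limit F c pi -> forall z : forall j, F j,
    (forall j j' (u : Hom j j'), fmap F u (z j) = z j') ->
    exists w : c, forall j, pi j w = z j.
Proof.
  intros [_ hu] z hz.
  destruct (hu (unit : SetCat@{s o}) (fun j _ => z j)) as [w [hw _]].
  { intros j j' u. apply functional_extensionality. intros t. apply hz. }
  exists (w tt). intros j. exact (f_equal (fun g => g tt) (hw j)).
Qed.

Lemma set_limit_ext (c : SetCat@{s o}) (pi : forall j, Hom c (F j)) :
  is_limit F c pi -> forall w w' : c, (forall j, pi j w = pi j w') -> w = w'.
Proof.
  intros [hc hu] w w' h.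
  destruct (hu (unit : SetCat@{s o}) (fun j _ => pi j w)) as [v [_ hv]].
  { intros j j' u. apply functional_extensionality. intros t.
    exact (f_equal (fun g => g w) (hc j j' u)). }
  assert (hw : v = fun _ => w) by (apply hv; reflexivity).
  assert (hw' : v = fun _ => w').
  { apply hv. intros j. apply functional_extensionality. intros t. symmetry. apply h. }
  exact (f_equal (fun g => g tt) (eq_trans (eq_sym hw) hw')).
Qed.

Lemma set_colimit_jointly_surjective (c : SetCat@{s o}) (iota : forall j, Hom (F j) c) :
  is_colimit F c iota -> forall z : c, exists j (y : F j), iota j y = z.
Proof.
  intros [_ hu] z.
  pose (hit := fun z : c =>
    if excluded_middle_informative (exists j (y : F j), iota j y = z) then true else false).
  destruct (hu (bool : SetCat@{s o}) (fun j _ => true)) as [v [_ hv]].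
  { intros j j' f. reflexivity. }
  assert (htrue : v = fun _ => true) by (apply hv; reflexivity).
  assert (hhit : v = hit).
  { apply hv. intros j. apply functional_extensionality. intros y. unfold hit. simpl.
    destruct excluded_middle_informative as [_|h]; [reflexivity|].
    exfalso. apply h. exists j, y. reflexivity. }
  pose proof (f_equal (fun g => g z) (eq_trans (eq_sym htrue) hhit)) as hz.
  unfold hit in hz. simpl in hz.
  destruct excluded_middle_informative as [h|_]; [exact h|discriminate].
Qed.
End SetLimits.

(** * Pointwise lambda-filtered colimits of models *)

Section Quotient.
Universe q.
Context (A : Type@{q}) (R : A -> A -> Prop).
Hypotheses (R_refl : forall a, R a a) (R_sym : forall a b, R a b -> R b a)
  (R_trans : forall a b c, R a b -> R b c -> R a c).

Definition quot : Type@{q} := {S : A -> Prop | exists a, S = R a}.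

Definition cls (a : A) : quot := exist _ (R a) (ex_intro _ a eq_refl).

Lemma cls_eq a b : R a b -> cls a = cls b.
Proof.
  intros h. unfold cls.
  assert (e : R a = R b).
  { apply functional_extensionality; intro c. apply propositional_extensionality.
    split; intro h'; eauto. }
  apply eq_exist_uncurried. exists e. apply proof_irrelevance.
Qed.

Lemma cls_inv a b : cls a = cls b -> R a b.
Proof.
  intros e. apply (f_equal (@proj1_sig _ _)) in e. simpl in e. rewrite e. apply R_refl.
Qed.

Lemma cls_surj (z : quot) : exists a, z = cls a.
Proof.
  destruct z as [S [a e]]. exists a. subst S. unfold cls. f_equal; apply proof_irrelevance.
Qed.

Definition rep (z : quot) : A :=
  proj1_sig (constructive_indefinite_description _ (cls_surj z)).

Lemma cls_rep (z : quot) : cls (rep z) = z.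
Proof. unfold rep. destruct constructive_indefinite_description. simpl. auto. Qed.
End Quotient.

Section FilteredColimit.
Universes s o.
Constraint s < o.
Context (K L : Type@{s}) (C : Category@{s s}) (E : Family@{s} C -> Prop)
  (hL : regular_card@{s} L) (hKL : card_le@{s s} K L)
  (J : Category@{s s}) (hJ : filtered@{s} L J) (D : Functor J (ModCat@{s o} K E)).

Definition stage (j : J) : Functor C SetCat@{s o} := proj1_sig (D j).

Definition tr {j k : J} (f : Hom j k) (x : C) : stage j x -> stage k x :=
  @nt C _ _ (fmap D f) x.

Lemma tr_comp {j k m : J} (g : Hom k m) (f : Hom j k) x e :
  tr (comp g f) x e = tr g x (tr f x e).
Proof. unfold tr. rewrite fmap_comp. reflexivity. Qed.

Lemma tr_id (j : J) x e : tr (idm j) x e = e.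
Proof. unfold tr. rewrite fmap_id. reflexivity. Qed.

Lemma tr_nat {j k : J} (f : Hom j k) x y (h : Hom x y) e :
  tr f y (fmap (stage j) h e) = fmap (stage k) h (tr f x e).
Proof. apply nt_natural. Qed.

Definition Germ (x : C) : Type@{s} := {j : J & stage j x}.

Definition germ_rel (x : C) (p q : Germ x) : Prop :=
  exists k (f : Hom (projT1 p) k) (g : Hom (projT1 q) k),
    tr f x (projT2 p) = tr g x (projT2 q).
Arguments germ_rel : clear implicits.

Lemma germ_rel_refl x p : germ_rel x p p.
Proof. exists (projT1 p), (idm _), (idm _). reflexivity. Qed.

Lemma germ_rel_sym x p q : germ_rel x p q -> germ_rel x q p.
Proof. intros [k [f [g h]]]. exists k, g, f. auto. Qed.

Lemma germ_rel_trans x p q r : germ_rel x p q -> germ_rel x q r -> germ_rel x p r.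
Proof.
  intros [k1 [f1 [g1 h1]]] [k2 [f2 [g2 h2]]].
  destruct (filtered_span g1 f2 hL hJ) as [m [a [b hab]]].
  exists m, (comp a f1), (comp b g2).
  rewrite !tr_comp, h1, <- h2, <- !tr_comp, hab. reflexivity.
Qed.

Definition colim_set (x : C) : Type@{s} := quot (germ_rel x).

Definition colim_cls {x : C} (p : Germ x) : colim_set x := cls (germ_rel x) p.

Lemma colim_cls_eq {x} (p q : Germ x) : germ_rel x p q -> colim_cls p = colim_cls q.
Proof. apply cls_eq; [apply germ_rel_sym|apply germ_rel_trans]. Qed.

Lemma colim_cls_inv {x} (p q : Germ x) : colim_cls p = colim_cls q -> germ_rel x p q.
Proof. apply cls_inv, germ_rel_refl. Qed.

Lemma colim_cls_tr {j k : J} (f : Hom j k) x e :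
  colim_cls (existT (fun j => stage j x) k (tr f x e)) = colim_cls (existT _ j e).
Proof. apply colim_cls_eq. exists k, (idm k), f. apply tr_id. Qed.

Definition map_germ {x y : C} (h : Hom x y) (p : Germ x) : Germ y :=
  existT _ (projT1 p) (fmap (stage (projT1 p)) h (projT2 p)).

Definition colim_fmap {x y : C} (h : Hom x y) (a : colim_set x) : colim_set y :=
  colim_cls (map_germ h (rep a)).

Lemma colim_fmap_cls {x y : C} (h : Hom x y) p :
  colim_fmap h (colim_cls p) = colim_cls (map_germ h p).
Proof.
  unfold colim_fmap. apply colim_cls_eq.
  destruct (colim_cls_inv (cls_rep (colim_cls p))) as [k [f [g e]]].
  exists k, f, g. simpl. rewrite !tr_nat, e. reflexivity.
Qed.

Definition colimF : Functor C SetCat@{s o}.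
Proof.
  refine {| fobj := (colim_set : C -> SetCat@{s o});
            fmap := fun x y h => (colim_fmap h : Hom (colim_set x : SetCat@{s o}) _) |}.
  - intros x. apply functional_extensionality; intro a. simpl.
    destruct (cls_surj a) as [[j e] ->]. fold (colim_cls (existT _ j e)).
    rewrite colim_fmap_cls. unfold map_germ. simpl. rewrite fmap_id. reflexivity.
  - intros x y z g f. apply functional_extensionality; intro a. simpl.
    destruct (cls_surj a) as [[j e] ->]. fold (colim_cls (existT _ j e)).
    rewrite !colim_fmap_cls. unfold map_germ. simpl. rewrite fmap_comp. reflexivity.
Defined.

Lemma common_stage {I : Type@{s}} {X : I -> C} (p : forall i, Germ (X i)) :
  card_lt I L ->
  exists (k : J) (e : forall i, stage k (X i)),
    forall i, colim_cls (p i) = colim_cls (existT _ k (e i)).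
Proof.
  intros hI.
  destruct (filtered_upper_bound (fun i => projT1 (p i)) hL hJ hI) as [k [io]].
  exists k, (fun i => tr (io i) _ (projT2 (p i))). intros i.
  rewrite colim_cls_tr. destruct (p i). reflexivity.
Qed.

Lemma stage_equalize (I : Type@{s}) (X : I -> C) (k : J) (a b : forall i, stage k (X i)) :
  card_lt I L ->
  (forall i, colim_cls (existT _ k (a i)) = colim_cls (existT _ k (b i))) ->
  exists (m : J) (c : Hom k m), forall i, tr c _ (a i) = tr c _ (b i).
Proof.
  intros hI h.
  assert (h' : forall i, {t : {kk : J & (Hom k kk * Hom k kk)%type} |
                           tr (fst (projT2 t)) _ (a i) = tr (snd (projT2 t)) _ (b i)}).
  { intros i. apply constructive_indefinite_description.
    destruct (colim_cls_inv (h i)) as [kk [f [g e]]]. exists (existT _ kk (f, g)). exact e. }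
  destruct (filtered_coequalize (fun i => projT1 (proj1_sig (h' i)))
              (fun i => fst (projT2 (proj1_sig (h' i))))
              (fun i => snd (projT2 (proj1_sig (h' i)))) hL hJ hI) as [m [c hc]].
  exists m, c. intros i. destruct (hc i) as [ci [h1 h2]].
  transitivity (tr ci _ (tr (fst (projT2 (proj1_sig (h' i)))) _ (a i))).
  - rewrite <- tr_comp, h1. reflexivity.
  - rewrite (proj2_sig (h' i)), <- tr_comp, h2. reflexivity.
Qed.

Section Limits.
Context (I : Category@{s s}) (Dg : Functor I C) (hs : small_cat@{s} K I)
  (c : C) (pi : forall i, Hom c (Dg i)) (hlim : is_limit Dg c pi).

(* The only use of [kappa <= lambda]. *)
Lemma small_Mor_lt : card_lt@{s s} (Mor I) L.
Proof. exact (card_lt_le_trans hs hKL). Qed.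

Lemma small_Ob_lt : card_lt@{s s} I L.
Proof. exact (small_cat_Ob small_Mor_lt). Qed.

Lemma stage_limit (k : J) :
  is_limit (compF Dg (stage k)) (stage k c) (fun i => fmap (stage k) (pi i)).
Proof. exact (proj1 (proj2_sig (D k)) I Dg hs c pi hlim). Qed.

Lemma colim_limit_exists (q : forall i, colim_set (Dg i)) :
  (forall i i' (u : Hom i i'), colim_fmap (fmap Dg u) (q i) = q i') ->
  exists a : colim_set c, forall i, colim_fmap (pi i) a = q i.
Proof.
  intros hq.
  destruct (common_stage (fun i => rep (q i)) small_Ob_lt) as [k [e he]].
  assert (hq_e : forall i, q i = colim_cls (existT _ k (e i))).
  { intros i. rewrite <- he. symmetry. apply cls_rep. }
  destruct (@stage_equalize (Mor I) (fun m => Dg (projT1 (projT2 m))) k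
              (fun m => fmap (stage k) (fmap Dg (projT2 (projT2 m))) (e (projT1 m)))
              (fun m => e (projT1 (projT2 m))) small_Mor_lt) as [m [cc hcc]].
  { intros [i [i' u]]. simpl. pose proof (hq i i' u) as h.
    rewrite !hq_e, colim_fmap_cls in h. exact h. }
  destruct (set_limit_point (stage_limit m) (fun i => tr cc _ (e i))) as [w hw].
  { intros i i' u. simpl. rewrite <- tr_nat.
    exact (hcc (existT _ i (existT _ i' u))). }
  exists (colim_cls (existT _ m w)). intros i.
  rewrite colim_fmap_cls, hq_e. unfold map_germ. simpl.
  rewrite (hw i). apply colim_cls_tr.
Qed.

Lemma colim_limit_unique (a a' : colim_set c) :
  (forall i, colim_fmap (pi i) a = colim_fmap (pi i) a') -> a = a'.
Proof.
  intros h.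
  destruct (common_stage (X := fun _ : bool => c) (fun b => rep (if b then a else a'))
              (card_lt_bool (proj1 hL))) as [k [e he]].
  assert (ha : a = colim_cls (existT _ k (e true)))
    by (rewrite <- he; symmetry; apply cls_rep).
  assert (ha' : a' = colim_cls (existT _ k (e false)))
    by (rewrite <- he; symmetry; apply cls_rep).
  destruct (@stage_equalize I Dg k (fun i => fmap (stage k) (pi i) (e true))
              (fun i => fmap (stage k) (pi i) (e false)) small_Ob_lt) as [m [cc hcc]].
  { intros i. pose proof (h i) as hi. rewrite ha, ha', !colim_fmap_cls in hi. exact hi. }
  assert (heq : tr cc c (e true) = tr cc c (e false)).
  { apply (set_limit_ext (stage_limit m)). intros i. simpl. rewrite <- !tr_nat. apply hcc. }
  rewrite ha, ha', <- (colim_cls_tr cc), heq. apply colim_cls_tr.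
Qed.

Lemma colimF_preserves_limit :
  is_limit (compF Dg colimF) (colimF c) (fun i => fmap colimF (pi i)).
Proof.
  split.
  - intros i i' u.
    change (comp (fmap colimF (fmap Dg u)) (fmap colimF (pi i)) = fmap colimF (pi i')).
    rewrite <- fmap_comp. f_equal. apply (proj1 hlim).
  - intros c' pi' hc'.
    assert (ex : forall z : c',
               exists a : colim_set c, forall i, colim_fmap (pi i) a = pi' i z).
    { intros z. apply colim_limit_exists. intros i i' u.
      exact (f_equal (fun g => g z) (hc' i i' u)). }
    exists (fun z => proj1_sig (constructive_indefinite_description _ (ex z))). split.
    + intros i. apply functional_extensionality. intros z. simpl.
      destruct constructive_indefinite_description as [a ha]. apply ha.
    + intros v hv. apply functional_extensionality. intros z.
      destruct constructive_indefinite_description as [a ha]. simpl. apply colim_limit_unique.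
      intros i. rewrite ha. exact (eq_sym (f_equal (fun g => g z) (hv i))).
Qed.
End Limits.

Lemma colimF_model : is_model@{s o} K E colimF.
Proof.
  split.
  - intros I Dg hs c pi hlim. apply colimF_preserves_limit; assumption.
  - intros f hf a. destruct (cls_surj a) as [[j e] ->].
    destruct (proj2 (proj2_sig (D j)) f hf e) as [i [b hb]].
    exists i, (colim_cls (existT _ j b)). simpl.
    rewrite colim_fmap_cls. unfold map_germ. simpl.
    change (fmap (stage j) (fam_arr f i) b = e) in hb. rewrite hb. reflexivity.
Qed.

Definition colim_model : ModCat@{s o} K E := exist _ colimF colimF_model.

Definition colim_in (j : J) : Hom (D j) colim_model.
Proof.
  refine (@Build_NatTrans C (stage j) colimF (fun x e => colim_cls (existT _ j e)) _).
  intros x y h e. symmetry. apply colim_fmap_cls.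
Defined.

Lemma colim_in_cocone : is_cocone D colim_model colim_in.
Proof. intros j j' u. apply NatTrans_eq. intros x v. apply colim_cls_tr. Qed.

Section Comparison.
Context (X : ModCat@{s o} K E) (iota : forall j, Hom (D j) X) (hcol : is_colimit D X iota).

Lemma colimit_germ_rel {x j j' e e'} :
  @nt C _ _ (iota j) x e = @nt C _ _ (iota j') x e' ->
  germ_rel x (existT _ j e) (existT _ j' e').
Proof.
  intros h. destruct (proj2 hcol colim_model colim_in colim_in_cocone) as [v [hv _]].
  apply colim_cls_inv.
  change (@nt C _ _ (colim_in j) x e = @nt C _ _ (colim_in j') x e').
  rewrite <- (hv j), <- (hv j'). simpl. rewrite h. reflexivity.
Qed.

Lemma colimit_iota_rel x (p q : Germ x) :
  germ_rel x p q ->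
  @nt C _ _ (iota (projT1 p)) x (projT2 p) = @nt C _ _ (iota (projT1 q)) x (projT2 q).
Proof.
  intros [k [f [g h]]].
  rewrite <- (proj1 hcol _ k f), <- (proj1 hcol _ k g). simpl. exact (f_equal _ h).
Qed.

Definition colim_desc_fun (x : C) (a : colim_set x) : proj1_sig X x :=
  @nt C _ _ (iota (projT1 (rep a))) x (projT2 (rep a)).

Lemma colim_desc_cls x (p : Germ x) :
  colim_desc_fun (colim_cls p) = @nt C _ _ (iota (projT1 p)) x (projT2 p).
Proof. apply colimit_iota_rel, colim_cls_inv, cls_rep. Qed.

Definition colim_desc : Hom colim_model X.
Proof.
  refine (@Build_NatTrans C colimF (proj1_sig X) colim_desc_fun _).
  intros x y h a. destruct (cls_surj a) as [[j e] ->].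
  change (colim_desc_fun (colim_fmap h (colim_cls (existT _ j e)))
          = fmap (proj1_sig X) h (colim_desc_fun (colim_cls (existT _ j e)))).
  rewrite colim_fmap_cls, !colim_desc_cls. apply nt_natural.
Defined.

Lemma colimit_jointly_surjective {x} (y : proj1_sig X x) :
  exists j e, @nt C _ _ (iota j) x e = y.
Proof.
  destruct (proj2 hcol colim_model colim_in colim_in_cocone) as [v [hv _]].
  destruct (proj2 hcol X iota (proj1 hcol)) as [u [_ hu]].
  assert (hid : comp colim_desc v = idm X).
  { transitivity u; [symmetry|]; apply hu; intros j; [|apply comp_idl].
    rewrite <- comp_assoc, hv. apply NatTrans_eq. intros z e. apply colim_desc_cls. }
  destruct (cls_surj (@nt C _ _ v x y)) as [[j e] he].
  exists j, e.
  etransitivity; [symmetry; exact (colim_desc_cls (existT (fun j => stage j x) j e))|].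
  change (colim_desc_fun (cls (germ_rel x) (existT _ j e)) = y). rewrite <- he.
  exact (f_equal (fun t : Hom X X => @nt C _ _ t x y) hid).
Qed.
End Comparison.
End FilteredColimit.

Lemma presentable_factor@{s o | s < o +} (L : Type@{s}) (A : Category@{o s}) (P : A)
  (hP : presentable@{s o} L P) (J : Category@{s s}) (D : Functor J A) (hJ : filtered@{s} L J)
  (X : A) (iota : forall j, Hom (D j) X) (hcol : is_colimit D X iota) (g : Hom P X) :
  exists j (g' : Hom P (D j)), comp (iota j) g' = g.
Proof. exact (set_colimit_jointly_surjective (hP J D hJ X iota hcol) g). Qed.

Lemma accessible_presentable_cover@{s o | s < o +} (L : Type@{s}) (A : Category@{o s}) :
  accessible@{s o} L A -> forall X : A,
    exists (J : Category@{s s}) (D : Functor J A),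
      filtered@{s} L J /\ (forall j, presentable@{s o} L (D j)) /\
      exists iota : forall j, Hom (D j) X, is_colimit D X iota.
Proof.
  intros [_ [I [G [hG hcover]]]] X.
  destruct (hcover X) as [J [D [hJ [hDG hcol]]]].
  exists J, D. split; [exact hJ|]. split; [|exact hcol].
  intros j. destruct (hDG j) as [i ->]. apply hG.
Qed.

Polymorphic Theorem mainTheorem2@{s o | s < o +}
  (K L : Type@{s}) (C : Category@{s s}) (E : Family@{s} C -> Prop)
  (hK : regular_card@{s} K) (hL : regular_card@{s} L)
  (hKL : card_le@{s s} K L)
  (hC : has_small_limits@{s} K C)
  (hacc : accessible@{s o} L (ModCat@{s o} K E))
  (M N : ModCat@{s o} K E) (alpha : Hom M N) :
  pure@{s o} L alpha -> elementary@{s o} alpha.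
Proof.
  intros hpure u x i _ a [b hb].
  destruct (accessible_presentable_cover hacc M) as [J1 [D1 [hJ1 [hP1 [iota1 hcol1]]]]].
  destruct (accessible_presentable_cover hacc N) as [J2 [D2 [hJ2 [hP2 [iota2 hcol2]]]]].
  destruct (colimit_jointly_surjective hL hKL hJ1 hcol1 a) as [j1 [e1 <-]].
  destruct (colimit_jointly_surjective hL hKL hJ2 hcol2 b) as [j2 [e2 <-]].
  destruct (presentable_factor (hP1 j1) hJ2 hcol2 (comp alpha (iota1 j1))) as [j3 [g hg]].
  assert (hsame : @nt C _ _ (iota2 j3) x (@nt C _ _ g x e1)
                  = @nt C _ _ (iota2 j2) x (fmap (stage D2 j2) i e2)).
  { rewrite (nt_natural (iota2 j2)), hb.
    exact (f_equal (fun t : Hom (D1 j1) N => @nt C _ _ t x e1) hg). }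
  destruct (colimit_germ_rel hL hKL hJ2 hcol2 hsame) as [k [f [f' hff]]].
  destruct (hpure (D1 j1) (D2 k) (hP1 j1) (hP2 k) (iota1 j1) (comp (fmap D2 f) g) (iota2 k))
    as [h hh].
  { rewrite comp_assoc, (proj1 hcol2). symmetry. exact hg. }
  exists (@nt C _ _ h u (tr D2 f' u e2)).
  rewrite <- nt_natural.
  change (h x (fmap (stage D2 k) i (tr D2 f' u e2)) = iota1 j1 x e1).
  rewrite <- tr_nat. cbn [projT1 projT2] in *. rewrite <- hff, <- hh. reflexivity.
Qed.
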